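(* Let $G$ be a connected graph, let $M \subseteq V(G)$ be a longest path transversal of $G$, and let $D \subseteq M$ be a connected dominating set of $G[M]$. Let $C_1,\dots,C_t$ be the connected components of $G \setminus M$, and let $C_{\max}$ be a path-maximal component with respect to $M$. Let $S \subseteq M$ be a set that dominates $\mathsf{bd}(C_{\max},M)$. Then $D \cup S$ is a longest path transversal of $G$.
   Context: All graphs are finite, simple. A longest path of a connected graph $G$ is a path of maximum length (number of edges) in $G$. A longest path transversal of $G$ is a set $S \subseteq V(G)$ such that every longest path of $G$ contains at least one vertex of $S$. For $X,Y\subseteq V(G)$, $\mathsf{bd}(X,Y)=\{x\in X : x \text{ has a neighbor in } Y\}$. A set $D$ is a connected dominating set of a graph $F$ if $F[D]$ is connected and every vertex of $F$ is in $D$ or adjacent to a vertex of $D$; a set $S$ dominates a set $Z$ if every vertex of $Z$ is in $S$ or has a neighbor in $S$. Given $M\subseteq V(G)$ and the components $C_1,\dots,C_t$ of $G\setminus M$, let $t_i$ be the length of a longest path of $G[C_i]$ having at least one endpoint in $\mathsf{bd}(C_i,M)$; a component $C_{\max}$ is path-maximal with respect to $M$ if $t_{\max}\ge t_i$ for all $1\le i\le t$. *)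

(* A simple graph is a symmetric irreflexive relation e on a finType T. *)
From mathcomp Require Import all_boot.
Set Implicit Arguments. Unset Strict Implicit. Unset Printing Implicit Defensive.

Section Graphs.
Variables (T : finType) (e : rel T).

Definition gpath (A : {set T}) (p : seq T) : bool :=
  if p is x :: q then [&& path e x q, uniq p & all (fun v => v \in A) p]
  else false.

Definition plen (p : seq T) : nat := (size p).-1.

Definition longest_path (p : seq T) : Prop :=
  gpath setT p /\ forall q, gpath setT q -> plen q <= plen p.

Definition lp_transversal (S : {set T}) : Prop :=
  forall p, longest_path p -> has (fun v => v \in S) p.

Definition connected_set (A : {set T}) : Prop :=
  forall x y, x \in A -> y \in A ->
    exists p, [/\ gpath A p, head x p = x & last x p = y].

Definition bd (X Y : {set T}) : {set T} := [set x in X | [exists y in Y, e x y]].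

Definition dominates (S Z : {set T}) : Prop :=
  forall z, z \in Z -> z \in S \/ exists2 s, s \in S & e z s.

Definition conn_dom_set (D F : {set T}) : Prop :=
  [/\ D \subset F, connected_set D & dominates D F].

Definition component_of_minus (M C : {set T}) : Prop :=
  [/\ C != set0, C \subset ~: M, connected_set C &
      forall x y, x \in C -> y \notin M -> e x y -> y \in C].

Definition endpoint_in (B : {set T}) (p : seq T) : bool :=
  if p is x :: q then (x \in B) || (last x q \in B) else false.

Definition bd_path (M C : {set T}) (p : seq T) : bool :=
  gpath C p && endpoint_in (bd C M) p.

Definition path_maximal (M Cmax : {set T}) : Prop :=
  component_of_minus M Cmax /\
  exists2 q, bd_path M Cmax q &
    forall C p, component_of_minus M C -> bd_path M C p -> plen p <= plen q.

End Graphs.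

(** Let P be a longest path missing D ∪ S; it meets M.  If u ∈ bd(C_max, M)
    and v ∈ M \ D, then u has a neighbour s ∈ S and, D being a connected
    dominating set of G[M], there is a path from s through D to a neighbour
    of v; it avoids P, so it can be inserted between u and v.  If P enters
    C_max, following P out of C_max towards M gives consecutive vertices u, v
    as above, and the insertion lengthens P.  Otherwise let m be the first
    vertex of P in M: the part of P before m is a path of a component of
    G \ M ending in its boundary, hence no longer than the longest such path
    of C_max; replacing it by that path, which ends at some u ∈ bd(C_max, M),
    followed by the detour from u to m, again gives a longer path. *)
From mathcomp Require Import all_boot zify.
Set Implicit Arguments. Unset Strict Implicit. Unset Printing Implicit Defensive.

Section GraphPaths.
Variables (T : finType) (e : rel T).
Hypothesis e_sym : symmetric e.

Lemma gpathE A p :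
  gpath e A p = [&& ~~ nilp p, sorted e p, uniq p & all [in A] p].
Proof. by case: p. Qed.

Lemma sorted_rev p : sorted e (rev p) = sorted e p.
Proof. by rewrite rev_sorted; case: p => //= x p; apply: eq_path. Qed.

Lemma gpath_rev A p : gpath e A (rev p) = gpath e A p.
Proof. by rewrite !gpathE rev_nilp sorted_rev rev_uniq all_rev. Qed.

Lemma longest_path_rev p : longest_path e p -> longest_path e (rev p).
Proof.
by case=> gp maxp; split=> [|q]; rewrite ?gpath_rev // /plen size_rev; apply: maxp.
Qed.

Lemma longest_path_size p q :
  longest_path e p -> gpath e setT q -> size q <= size p.
Proof.
case=> gp maxp gq; have := maxp q gq; rewrite /plen.
by case: p gp {maxp} => // x p _; case: q gq.
Qed.

Lemma connected_set_path A x y :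
  connected_set e A -> x \in A -> y \in A ->
  exists2 p, gpath e A (x :: p) & last x p = y.
Proof.
move=> cA xA yA; have [[|x' p] [gp /= hx ly]] // := cA x y xA yA.
by subst x'; exists p.
Qed.

Lemma splice_gpath L u s X v R :
  sorted e (rcons L u) -> path e s X -> path e v R ->
  e u s -> e (last s X) v ->
  uniq (s :: X) -> uniq (rcons L u ++ v :: R) ->
  ~~ has [in s :: X] (rcons L u ++ v :: R) ->
  gpath e setT (rcons L u ++ (s :: X) ++ v :: R).
Proof.
move=> sLu pX pR us Xv uX uLR disj; rewrite gpathE; apply/and4P; split.
- by case: L {sLu uLR disj}.
- by rewrite cat_rcons sorted_cat_cons sLu /= us cat_path pX /= Xv.
- have /perm_uniq -> : perm_eq (rcons L u ++ (s :: X) ++ v :: R)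
                              ((s :: X) ++ rcons L u ++ v :: R).
    by rewrite perm_catCA.
  by rewrite cat_uniq uX disj.
- by apply/allP => z; rewrite inE.
Qed.

Lemma conn_dom_bridge (D M : {set T}) s m :
  conn_dom_set e D M -> s \in M -> m \in M -> m \notin D ->
  exists X, [/\ path e s X, uniq (s :: X), {subset X <= D} & e (last s X) m].
Proof.
case=> _ connD domD sM mM mD.
have [d' d'D md'] : exists2 d', d' \in D & e m d'.
  by case: (domD m mM) => // mD'; rewrite mD' in mD.
have md'_sym : e d' m by rewrite e_sym.
case sD: (s \in D).
  have [X /and3P[pX uX /allP XD] lX] := connected_set_path connD sD d'D.
  exists X; split; rewrite ?lX // => z zX.
  by apply: XD; rewrite inE zX orbT.
have [|[d dD sd]] := domD s sM; first by rewrite sD.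
have [Y /and3P[pY uY /allP YD] lY] := connected_set_path connD dD d'D.
exists (d :: Y); split=> //=; first by rewrite sd.
- by rewrite -/(uniq (d :: Y)) uY andbT; apply: contraFN sD => /YD.
- by rewrite lY.
Qed.

Lemma bridge_detour (D M S : {set T}) L u v R s :
  conn_dom_set e D M -> S \subset M -> s \in S -> e u s -> v \in M ->
  sorted e (rcons L u) -> path e v R -> uniq (rcons L u ++ v :: R) ->
  ~~ has [in D :|: S] (rcons L u ++ v :: R) ->
  exists X, gpath e setT (rcons L u ++ (s :: X) ++ v :: R).
Proof.
move=> cdD sSM sS us vM sLu pR uLR avoid.
have vD : v \notin D.
  apply: contra avoid => vD; apply/hasP; exists v; last by rewrite inE vD.
  by rewrite mem_cat mem_head orbT.
have [X [pX uX XD Xv]] := conn_dom_bridge cdD (subsetP sSM s sS) vM vD.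
exists X; apply: splice_gpath => //.
apply: contra avoid => /hasP[z zLR zsX]; apply/hasP; exists z => //.
by move: zsX; rewrite !inE => /predU1P[->|/XD ->]; rewrite ?sS ?orbT.
Qed.

Definition edge_minus (M : {set T}) : rel T :=
  [rel x y | [&& e x y, x \notin M & y \notin M]].

Definition component_at (M : {set T}) (x : T) : {set T} :=
  [set y | (y \notin M) && connect (edge_minus M) x y].

Lemma path_edge_minus (M : {set T}) x p :
  path e x p -> all [predC M] (x :: p) -> path (edge_minus M) x p.
Proof.
elim: p x => //= y p IH x /andP[xy pp] /and3P[xM yM allp].
by rewrite /edge_minus /= xy xM yM IH //= yM.
Qed.

Lemma path_edge_minus_notin (M : {set T}) x p :
  path (edge_minus M) x p -> all [predC M] p.
Proof. by elim: p x => //= y p IH x /andP[/and3P[_ _ ->] /IH]. Qed.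

Lemma component_atP (M : {set T}) x :
  x \notin M -> component_of_minus e M (component_at M x).
Proof.
move=> xM; have em_sym : symmetric (edge_minus M).
  by move=> y z; rewrite /edge_minus /= e_sym [(y \notin M) && _]andbC.
split.
- by apply/set0Pn; exists x; rewrite inE xM connect0.
- by apply/subsetP => y; rewrite !inE => /andP[].
- move=> y z; rewrite !inE => /andP[yM xy] /andP[zM xz].
  have /connectP[p yp ->] : connect (edge_minus M) y z.
    by apply: connect_trans xz; rewrite (sym_connect_sym em_sym).
  have [p' yp' up' _] := shortenP yp.
  have py : path e y p' by apply: sub_path yp' => a b /andP[].
  have notM : all [predC M] (y :: p') by rewrite /= yM (path_edge_minus_notin yp').
  have inC : all [in component_at M x] (y :: p').
    apply/allP => w wp; have wM : w \notin M := allP notM w wp.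
    rewrite inE wM.
    exact: connect_trans xy (path_connect yp' wp).
  by exists (y :: p'); split=> //; rewrite gpathE up' inC andbT /= py.
- move=> y z; rewrite !inE => /andP[yM xy] zM yz; rewrite zM.
  by apply: connect_trans xy (connect1 _); rewrite /edge_minus /= yz yM.
Qed.

Lemma component_of_minus_notin (M C : {set T}) x :
  component_of_minus e M C -> x \in C -> x \notin M.
Proof. by case=> _ /subsetP CM _ _ /CM; rewrite inE. Qed.

Lemma bd_path_of_outside_path (M : {set T}) x a m :
  path e x a -> uniq (x :: a) -> all [predC M] (x :: a) ->
  m \in M -> e (last x a) m ->
  exists2 C, component_of_minus e M C & bd_path e M C (x :: a).
Proof.
move=> pa ua aM mM am; have xM : x \notin M by case/andP: aM.
exists (component_at M x); first exact: component_atP.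
have inC : all [in component_at M x] (x :: a).
  apply/allP => w wa; have wM : w \notin M := allP aM w wa.
  by rewrite inE wM; apply: path_connect (path_edge_minus pa aM) _ wa.
apply/andP; split; first by rewrite gpathE ua inC andbT /= pa.
apply/orP; right; rewrite inE (allP inC) ?mem_last //=.
by apply/existsP; exists m; rewrite mM.
Qed.

Lemma component_exit (M C : {set T}) r l x :
  component_of_minus e M C -> sorted e (l ++ x :: r) -> x \in C -> has [in M] r ->
  exists L u v R, [/\ l ++ x :: r = rcons L u ++ v :: R, u \in bd e C M & v \in M].
Proof.
case=> _ _ _ closedC; elim: r l x => [|y r IH] l x //= slr xC.
have xy : e x y by move: slr; rewrite sorted_cat_cons /= => /andP[_ /andP[]].
case yM: (y \in M) => /= hr.
  exists l, x, y, r; split=> //; first by rewrite cat_rcons.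
  by rewrite inE xC; apply/existsP; exists y; rewrite yM.
have yC := closedC x y xC (negbT yM) xy.
by have := IH (rcons l x) y; rewrite cat_rcons; apply.
Qed.

Lemma bd_path_rcons (M C : {set T}) q :
  bd_path e M C q ->
  exists Q u, [/\ gpath e C (rcons Q u), u \in bd e C M & size q = (size Q).+1].
Proof.
case: q => // x q /andP[gq /orP[xbd | lbd]].
  by exists (rev q), x; rewrite -rev_cons gpath_rev size_rev.
by exists (belast x q), (last x q); rewrite -lastI size_belast.
Qed.

End GraphPaths.

Section LongestPathTransversal.
Variables (T : finType) (e : rel T) (M D S Cmax : {set T}).
Hypotheses (e_sym : symmetric e) (cdD : conn_dom_set e D M) (sSM : S \subset M).
Hypothesis domS : dominates e S (bd e Cmax M).

Lemma outside_M_notin_DS x : x \notin M -> x \notin D :|: S.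
Proof.
case: cdD => /subsetP DM _ _; apply: contra; rewrite inE.
by case/orP=> [/DM | /(subsetP sSM)].
Qed.

Lemma longest_path_no_exit P L u v R :
  longest_path e P -> ~~ has [in D :|: S] P -> P = rcons L u ++ v :: R ->
  u \in bd e Cmax M -> v \in M -> False.
Proof.
move=> lpP avoidP PE ubd vM.
have [uS | [s sS us]] := domS ubd.
  move/hasP: avoidP; apply; exists u; last by rewrite inE uS orbT.
  by rewrite PE mem_cat mem_rcons mem_head.
have := lpP.1; rewrite gpathE PE => /and4P[_ sP uP _].
have [sLu pR] := cat_sorted2 sP.
rewrite PE in avoidP.
have [X gX] := bridge_detour e_sym cdD sSM sS us vM sLu pR uP avoidP.
by have := longest_path_size lpP gX; rewrite PE !size_cat /=; lia.
Qed.

Lemma longest_path_meeting_Cmax P :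
  component_of_minus e M Cmax -> longest_path e P -> ~~ has [in D :|: S] P ->
  has [in Cmax] P -> has [in M] P -> False.
Proof.
move=> compC lpP avoidP /hasP[x xP xC].
have xM := component_of_minus_notin compC xC.
have := lpP.1; rewrite gpathE => /and4P[_ sP _ _].
case/splitPr: xP lpP avoidP sP => r1 r2 lpP avoidP sP.
rewrite has_cat /= (negbTE xM) /= => /orP[hr1 | hr2].
  have revE : rev (r1 ++ x :: r2) = rev r2 ++ x :: rev r1.
    by rewrite rev_cat rev_cons cat_rcons.
  have sR : sorted e (rev r2 ++ x :: rev r1) by rewrite -revE sorted_rev.
  rewrite -has_rev in hr1.
  have [L [u [v [R [E ubd vM]]]]] := component_exit compC sR xC hr1.
  apply: (longest_path_no_exit (longest_path_rev e_sym lpP) _ (etrans revE E) ubd vM).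
  by rewrite has_rev.
have [L [u [v [R [E ubd vM]]]]] := component_exit compC sP xC hr2.
exact: (longest_path_no_exit lpP avoidP E ubd vM).
Qed.

Lemma longest_path_avoiding_Cmax P :
  path_maximal e M Cmax -> longest_path e P -> ~~ has [in D :|: S] P ->
  ~~ has [in Cmax] P -> has [in M] P -> False.
Proof.
move=> [compC [q bq maxq]] lpP avoidP noC hM.
case: {hM}(split_find hM) lpP avoidP noC => m a b mM aM lpP avoidP noC.
have := lpP.1; rewrite gpathE cat_rcons => /and4P[_ sP uP _].
have [sam pb] : sorted e (rcons a m) /\ path e m b.
  by apply/andP; rewrite -sorted_cat_cons.
have [Q [u [gQ ubd szq]]] := bd_path_rcons e_sym bq.
move: gQ; rewrite gpathE => /and4P[_ sQ uQ /allP QC].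
have [uS | [s sS us]] := domS ubd.
  have uC : u \in Cmax by move: ubd; rewrite inE => /andP[].
  by have := component_of_minus_notin compC uC; rewrite (subsetP sSM).
have size_a : size a <= (size Q).+1.
  have ua : uniq a by move: uP; rewrite cat_uniq => /and3P[].
  case: a sam ua aM {lpP avoidP noC sP uP} => [|x a] // sam ua aM.
  move: sam; rewrite /= rcons_path => /andP[pa am].
  rewrite -all_predC in aM.
  have [C compC' bpC] := bd_path_of_outside_path e_sym pa ua aM mM am.
  by have := maxq C _ compC' bpC; rewrite /plen szq ltnS.
have inP z : z \in m :: b -> z \in rcons a m ++ b.
  by rewrite cat_rcons mem_cat => ->; rewrite orbT.
have uQb : uniq (rcons Q u ++ m :: b).
  rewrite cat_uniq uQ andTb; apply/andP; split.
    by apply/hasPn => z /inP zP; apply: contra (QC z) (hasPn noC z zP).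
  by move: uP; rewrite cat_uniq => /and3P[].
have avoidQb : ~~ has [in D :|: S] (rcons Q u ++ m :: b).
  rewrite has_cat negb_or; apply/andP; split; apply/hasPn => z.
    by move/QC/(component_of_minus_notin compC); apply: outside_M_notin_DS.
  by move/inP; apply: (hasPn avoidP).
have [X gX] := bridge_detour e_sym cdD sSM sS us mM sQ pb uQb avoidQb.
have := longest_path_size lpP gX; rewrite !size_cat /= !size_rcons.
by clear -size_a; lia.
Qed.

End LongestPathTransversal.

Theorem theorem3p1 (T : finType) (e : rel T) :
  symmetric e -> irreflexive e -> connected_set e setT ->
  forall M D S Cmax : {set T},
    lp_transversal e M ->
    conn_dom_set e D M ->
    path_maximal e M Cmax ->
    S \subset M -> dominates e S (bd e Cmax M) ->
    lp_transversal e (D :|: S).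
Proof.
move=> e_sym _ _ M D S Cmax lpM cdD maxC sSM domS P lpP.
apply/idPn => avoidP; have hM := lpM P lpP.
have [hC | noC] := boolP (has [in Cmax] P).
  exact: (longest_path_meeting_Cmax e_sym cdD sSM domS maxC.1 lpP avoidP hC hM).
exact: (longest_path_avoiding_Cmax e_sym cdD sSM domS maxC lpP avoidP noC hM).
Qed.
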